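(* Consider the flat-pricing market described in the context, and assume the network cost coefficient satisfies $\eta<\big(\kappa_{\mathrm{avg}}\,\Phi_{\max}^{1-\theta}\big)^{-1}$. Then: (i) $R(p)$ is unimodal on $[0,p_{\max})$ (i.e., there is $v$ such that $R$ is monotonically increasing for $p\le v$ and monotonically decreasing for $p\ge v$), and the feasible price set $\mathcal P$ is non-empty and connected. (ii) If $R'(p_0)<0$, then the network is opt-saturated and the unique equilibrium price is $p^\star=p_0$, where $$p_0=\Phi_{\max}^{\theta}\left(1-\frac{C_{3g}}{\kappa_{\mathrm{peak}}\,\hat N\,\mathbb E[\Phi]}\right)^{\frac{\theta}{2-\sigma}},\qquad \mathbb E[\Phi]=\tfrac{1-\sigma}{2-\sigma}\Phi_{\max}.$$ (iii) If $R'(p_0)>0$, then the network is opt-unsaturated and the unique equilibrium price $p^\star=p^\star(\kappa_{\mathrm{avg}})$ is the unique solution of $R'(p)=0$ in $(0,p_{\max})$; moreover, viewing $\kappa_{\mathrm{avg}}$ as a variable, $\frac{\partial p^\star(\kappa_{\mathrm{avg}})}{\partial \kappa_{\mathrm{avg}}}>0$.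
   Context: Market model (single cell). There are $\hat N$ users (treated as a continuum of mass $\hat N$) in one base-station cell with capacity $C_{3g}>0$ (traffic volume per time slot), and time slots $t\in T=\{1,\dots,|T|\}$. Each user's daily traffic demand $\Phi$ is random with density $f_\Phi(x)=x^{-\sigma}/Z$ for $0\le x\le\Phi_{\max}$, where $0<\sigma<1$ and $Z=\Phi_{\max}^{1-\sigma}/(1-\sigma)$. All users share a temporal preference $w(t)\ge 0$ with $\sum_{t\in T}w(t)=1$; a user with demand $\Phi$ has per-slot demand $\phi(t)=w(t)\Phi$. The willingness to pay is $\gamma(t)=w(t)^{1-\theta}$ with price sensitivity $\theta\in(0,1)$; a user sending volumes $x(t)\le\phi(t)$ and paying $m$ gets net-utility $\sum_{t}\gamma(t)x(t)^\theta-m$. Offloading indicators: constants $\kappa_{\mathrm{avg}},\kappa_{\mathrm{peak}}\in(0,1]$ (independent of price) such that, if $X_{\rm tot}=\sum_t X(t)$ is the total (cellular+WiFi) traffic sent in the cell in a day, then the total daily cellular (3G) traffic is $\kappa_{\mathrm{avg}}X_{\rm tot}$ and the peak per-slot cellular traffic is $\kappa_{\mathrm{peak}}X_{\rm tot}$. Flat pricing with fee $p\ge0$: a user subscribes iff its net-utility $\Phi^\theta-p$ is positive, i.e. iff $\Phi>p^{1/\theta}$, and a subscriber sends its whole demand, $x(t)=\phi(t)$. Let $p_{\max}=\Phi_{\max}^\theta$ (no subscribers for $p\ge p_{\max}$). The provider's revenue (income minus linear cellular cost with coefficient $\eta>0$ per unit of cellular traffic) is, for $0\le p<p_{\max}$,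 $$R(p)=\hat N\int_{p^{1/\theta}}^{\Phi_{\max}}\big(p-\eta\kappa_{\mathrm{avg}}\Phi\big)f_\Phi(\Phi)\,d\Phi,$$ and $R(p)=0$ for $p\ge p_{\max}$. The peak cellular traffic is $A(p)=\kappa_{\mathrm{peak}}\hat N\int_{p^{1/\theta}}^{\Phi_{\max}}\Phi f_\Phi(\Phi)\,d\Phi$. Feasible price set: $\mathcal P=\{p: R(p)>0,\ A(p)\le C_{3g}\}$; threshold price $p_0=\inf\mathcal P$. An equilibrium price is any $p^\star\in\arg\max_{p\in\mathcal P}R(p)$. The network is saturated at $p$ if $A(p)=C_{3g}$; for a unique equilibrium price $p^\star$, the network is called opt-saturated if it is saturated at $p^\star$ and opt-unsaturated otherwise. *)

From Stdlib Require Import Reals.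
Open Scope R_scope.

(* Real power with the convention x^y = 0 for x <= 0 (only used with y > 0,
   where it is the continuous extension: 0^y = 0). *)
Definition rpow (x y : R) : R := if Rlt_dec 0 x then Rpower x y else 0.

Definition pmax (M theta : R) : R := rpow M theta.

(* E[Phi] for the density f(x) = x^{-sigma}/Z on [0, M] *)
Definition meanPhi (sigma M : R) : R := (1 - sigma) / (2 - sigma) * M.

(* Closed forms of the integrals of the density, for 0 <= a <= M:
   tailProb a = int_a^M f_Phi(x) dx = 1 - (a/M)^{1-sigma}
   tailMean a = int_a^M x f_Phi(x) dx
              = (1-sigma)/(2-sigma) * (M^{2-sigma} - a^{2-sigma}) / M^{1-sigma} *)
Definition tailProb (sigma M a : R) : R :=
  1 - rpow a (1 - sigma) / rpow M (1 - sigma).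
Definition tailMean (sigma M a : R) : R :=
  (1 - sigma) / (2 - sigma) * (rpow M (2 - sigma) - rpow a (2 - sigma))
    / rpow M (1 - sigma).

(* Revenue R(p) = N int_{p^{1/theta}}^{M} (p - eta kavg Phi) f(Phi) dPhi
   for p < p_max, and 0 for p >= p_max. *)
Definition revenue (N sigma theta M eta kavg p : R) : R :=
  if Rlt_dec p (pmax M theta) then
    N * (p * tailProb sigma M (rpow p (1 / theta))
         - eta * kavg * tailMean sigma M (rpow p (1 / theta)))
  else 0.

(* Peak cellular traffic A(p) = kpeak N int_{p^{1/theta}}^{M} Phi f(Phi) dPhi
   (no subscribers, hence 0, for p >= p_max). *)
Definition peak (N sigma theta M kpeak p : R) : R :=
  if Rlt_dec p (pmax M theta) then
    kpeak * N * tailMean sigma M (rpow p (1 / theta))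
  else 0.

Definition feasible (N C sigma theta M eta kavg kpeak p : R) : Prop :=
  revenue N sigma theta M eta kavg p > 0 /\ peak N sigma theta M kpeak p <= C.

Definition is_glb (S : R -> Prop) (x : R) : Prop :=
  (forall y, S y -> x <= y) /\ (forall z, (forall y, S y -> z <= y) -> z <= x).

Definition equilibrium (N C sigma theta M eta kavg kpeak p : R) : Prop :=
  feasible N C sigma theta M eta kavg kpeak p /\
  forall q, feasible N C sigma theta M eta kavg kpeak q ->
    revenue N sigma theta M eta kavg q <= revenue N sigma theta M eta kavg p.

Definition unique_equilibrium (N C sigma theta M eta kavg kpeak p : R) : Prop :=
  equilibrium N C sigma theta M eta kavg kpeak p /\
  forall q, equilibrium N C sigma theta M eta kavg kpeak q -> q = p.

(* In the price variable p = Phi^theta the revenue on (0, p_max) is N times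
   p - p^(1+alpha)/M^(1-sigma) - eta kavg c (M^(2-sigma) - p^(gamma+1))/M^(1-sigma),
   with alpha = (1-sigma)/theta < gamma = (2-sigma)/theta - 1.  Its derivative has
   the shape 1 - a p^alpha + b p^gamma: it is positive near 0, first decreasing
   and then increasing, and the bound on eta makes it negative at p_max.  So it
   changes sign exactly once, at p*, and the revenue is unimodal with maximum p*.
   The peak traffic is decreasing in p, hence the feasible set is an interval
   [p0, p_max) intersected with the positivity region of R, and the equilibrium is
   p0 if p0 lies beyond p* (the capacity binds) and p* otherwise.  Finally p* is
   the inverse of the map sending a critical price to the unique kavg for which it
   is critical; that map has positive derivative at p* because the derivative of R
   crosses 0 downwards there, so p* increases with kavg. *)

From Pilot Require Import Defs.
From Stdlib Require Import Reals Lra Ranalysis5 ClassicalEpsilon.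
Open Scope R_scope.

Lemma Rpower_gt_0 x e : 0 < Rpower x e.
Proof. apply exp_pos. Qed.

Lemma Rpower_div x y e : 0 < x -> 0 < y -> Rpower (x / y) e = Rpower x e / Rpower y e.
Proof.
  intros Hx Hy. unfold Rpower, Rdiv.
  rewrite ln_mult, ln_Rinv by (auto; apply Rinv_0_lt_compat; exact Hy).
  rewrite Rmult_plus_distr_l, exp_plus, <- exp_Ropp. f_equal. f_equal. ring.
Qed.

Lemma rpow_Rpower x e : 0 < x -> rpow x e = Rpower x e.
Proof. intros Hx. unfold rpow. destruct (Rlt_dec 0 x); [reflexivity | lra]. Qed.

Lemma rpow_nonpos x e : x <= 0 -> rpow x e = 0.
Proof. intros Hx. unfold rpow. destruct (Rlt_dec 0 x); [lra | reflexivity]. Qed.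

Lemma derivable_pt_lim_interval_ext f g a b x l : a < x < b ->
  (forall y, a < y < b -> f y = g y) -> derivable_pt_lim g x l -> derivable_pt_lim f x l.
Proof.
  intros Hx Hfg Hg eps Heps. destruct (Hg eps Heps) as [d Hd].
  assert (Hm : 0 < Rmin d (Rmin (x - a) (b - x))).
  { apply Rmin_pos; [apply cond_pos | apply Rmin_pos; lra]. }
  exists (mkposreal _ Hm). intros h Hh0 Hh. simpl in Hh.
  pose proof (Rmin_l d (Rmin (x - a) (b - x))). pose proof (Rmin_r d (Rmin (x - a) (b - x))).
  pose proof (Rmin_l (x - a) (b - x)). pose proof (Rmin_r (x - a) (b - x)).
  apply Rabs_def2 in Hh.
  rewrite (Hfg (x + h)), (Hfg x) by lra.
  apply Hd; [exact Hh0 | apply Rabs_def1; lra].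
Qed.

Lemma derivable_pt_lim_Rpower_comb a b c e1 e2 x : 0 < x ->
  derivable_pt_lim (fun y => a + b * Rpower y e1 + c * Rpower y e2) x
    (b * (e1 * Rpower x (e1 - 1)) + c * (e2 * Rpower x (e2 - 1))).
Proof.
  intros Hx.
  replace (b * _ + c * _) with (0 + b * (e1 * Rpower x (e1 - 1)) + c * (e2 * Rpower x (e2 - 1)))
    by ring.
  apply (derivable_pt_lim_plus (fun y => a + b * Rpower y e1) (fun y => c * Rpower y e2)).
  - apply (derivable_pt_lim_plus (fun _ => a) (fun y => b * Rpower y e1)).
    + apply derivable_pt_lim_const.
    + apply derivable_pt_lim_scal, derivable_pt_lim_power, Hx.
  - apply derivable_pt_lim_scal, derivable_pt_lim_power, Hx.
Qed.

Lemma lt_of_derive_pos f f' a b : a < b ->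
  (forall x, a <= x <= b -> derivable_pt_lim f x (f' x)) ->
  (forall x, a < x < b -> 0 < f' x) -> f a < f b.
Proof.
  intros Hab Hd Hpos. destruct (MVT_cor2 f f' a b Hab Hd) as [x [Hx Hax]].
  specialize (Hpos x Hax). nra.
Qed.

Lemma lt_of_derive_neg f f' a b : a < b ->
  (forall x, a <= x <= b -> derivable_pt_lim f x (f' x)) ->
  (forall x, a < x < b -> f' x < 0) -> f b < f a.
Proof.
  intros Hab Hd Hneg. destruct (MVT_cor2 f f' a b Hab Hd) as [x [Hx Hax]].
  specialize (Hneg x Hax). nra.
Qed.

Lemma continuity_pt_pos_near f x : continuity_pt f x -> 0 < f x ->
  exists d, 0 < d /\ forall y, Rabs (y - x) < d -> 0 < f y.
Proof.
  intros Hc Hx. destruct (Hc (f x) Hx) as [d [Hd Hy]].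
  exists d. split; [exact Hd |]. intros y Hyx.
  destruct (Req_dec x y) as [<- | Hne]; [exact Hx |].
  assert (Hfy : Rabs (f y - f x) < f x) by (apply (Hy y); split; [split; [exact I | exact Hne] | exact Hyx]).
  apply Rabs_def2 in Hfy. lra.
Qed.

Lemma continuity_pt_neg_near f x : continuity_pt f x -> f x < 0 ->
  exists d, 0 < d /\ forall y, Rabs (y - x) < d -> f y < 0.
Proof.
  intros Hc Hx. destruct (continuity_pt_pos_near (- f)%F x) as [d [Hd Hy]].
  - apply continuity_pt_opp, Hc.
  - unfold opp_fct. lra.
  - exists d. split; [exact Hd |]. intros y Hyx. specialize (Hy y Hyx). unfold opp_fct in Hy. lra.
Qed.

Definition single_crossing (f : R -> R) (P z : R) : Prop :=
  0 < z < P /\ f z = 0 /\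
  (forall p, 0 < p < z -> 0 < f p) /\ (forall p, z < p <= P -> f p < 0).

Section SingleCrossing.

Variables (f : R -> R) (P z : R).
Hypothesis hz : single_crossing f P z.

Lemma single_crossing_lt p : 0 < p <= P -> 0 < f p -> p < z.
Proof.
  destruct hz as [Hz [Hfz [_ Hneg]]]. intros Hp Hfp.
  destruct (Rlt_or_le p z) as [H | H]; [exact H |].
  destruct (Req_dec p z) as [-> | Hne]; [lra |]. specialize (Hneg p ltac:(lra)). lra.
Qed.

Lemma single_crossing_gt p : 0 < p <= P -> f p < 0 -> z < p.
Proof.
  destruct hz as [Hz [Hfz [Hpos _]]]. intros Hp Hfp.
  destruct (Rlt_or_le z p) as [H | H]; [exact H |].
  destruct (Req_dec p z) as [-> | Hne]; [lra |]. specialize (Hpos p ltac:(lra)). lra.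
Qed.

Lemma single_crossing_root p : 0 < p <= P -> f p = 0 -> p = z.
Proof.
  intros Hp Hfp. destruct (Rtotal_order p z) as [H | [H | H]]; [| exact H |].
  - destruct hz as [_ [_ [Hpos _]]]. specialize (Hpos p ltac:(lra)). lra.
  - destruct hz as [_ [_ [_ Hneg]]]. specialize (Hneg p ltac:(lra)). lra.
Qed.

End SingleCrossing.

Section Margin.

Variables (al g a b : R).
Hypotheses (hal : 0 < al) (halg : al < g) (ha : 0 < a) (hb : 0 < b).

Definition margin p := 1 - a * Rpower p al + b * Rpower p g.

(* margin' p = p^(al-1) * margin_slope p *)
Definition margin_slope p := b * g * Rpower p (g - al) - a * al.

Lemma derivable_margin p : 0 < p ->
  derivable_pt_lim margin p (Rpower p (al - 1) * margin_slope p).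
Proof.
  intros Hp.
  replace (Rpower p (al - 1) * margin_slope p)
    with (- a * (al * Rpower p (al - 1)) + b * (g * Rpower p (g - 1))).
  - apply derivable_pt_lim_ext with (f := fun y => 1 + - a * Rpower y al + b * Rpower y g).
    + intros y. unfold margin. ring.
    + apply derivable_pt_lim_Rpower_comb, Hp.
  - unfold margin_slope. replace (g - 1) with ((al - 1) + (g - al)) by ring.
    rewrite Rpower_plus. ring.
Qed.

Lemma margin_slope_lt x y : 0 < x -> x < y -> margin_slope x < margin_slope y.
Proof.
  intros Hx Hxy. unfold margin_slope.
  assert (Rpower x (g - al) < Rpower y (g - al)) by (apply Rlt_Rpower_l; lra).
  assert (0 < b * g) by nra. nra.
Qed.

Lemma margin_decreasing x y : 0 < x -> x < y -> margin_slope y <= 0 -> margin y < margin x.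
Proof.
  intros Hx Hxy Hy.
  apply (lt_of_derive_neg margin (fun p => Rpower p (al - 1) * margin_slope p)); [exact Hxy | |].
  - intros p Hp. apply derivable_margin. lra.
  - intros p Hp. assert (margin_slope p < margin_slope y) by (apply margin_slope_lt; lra).
    pose proof (Rpower_gt_0 p (al - 1)). nra.
Qed.

Lemma margin_increasing x y : 0 < x -> x < y -> 0 <= margin_slope x -> margin x < margin y.
Proof.
  intros Hx Hxy Hy.
  apply (lt_of_derive_pos margin (fun p => Rpower p (al - 1) * margin_slope p)); [exact Hxy | |].
  - intros p Hp. apply derivable_margin. lra.
  - intros p Hp. assert (margin_slope x < margin_slope p) by (apply margin_slope_lt; lra).
    pose proof (Rpower_gt_0 p (al - 1)). nra.
Qed.

Lemma margin_pos_near_0 : exists e, 0 < e /\ forall p, 0 < p <= e -> 0 < margin p.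
Proof.
  set (e := Rpower (/ (2 * a)) (/ al)).
  exists e. split; [apply Rpower_gt_0 |]. intros p Hp.
  assert (Hpe : Rpower p al <= / (2 * a)).
  { replace (/ (2 * a)) with (Rpower e al).
    - apply Rle_Rpower_l; lra.
    - unfold e. rewrite Rpower_mult. replace (/ al * al) with 1 by (field; lra).
      apply Rpower_1, Rinv_0_lt_compat. lra. }
  assert (a * Rpower p al <= / 2).
  { replace (/ 2) with (a * / (2 * a)) by (field; lra). apply Rmult_le_compat_l; lra. }
  pose proof (Rpower_gt_0 p g). unfold margin. nra.
Qed.

Lemma margin_slope_neg_at_root P z : 0 < z < P -> margin z = 0 -> margin P < 0 ->
  margin_slope z < 0.
Proof.
  intros Hz Hmz HmP. destruct (Rlt_or_le (margin_slope z) 0) as [H | H]; [exact H |].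
  pose proof (margin_increasing z P ltac:(lra) ltac:(lra) H). lra.
Qed.

Lemma margin_single_crossing P : 0 < P -> margin P < 0 -> exists z, single_crossing margin P z.
Proof.
  intros HP HmP. destruct margin_pos_near_0 as [e [He Hpos]].
  pose proof (Rmin_l e (P / 2)). pose proof (Rmin_r e (P / 2)).
  set (x := Rmin e (P / 2)) in *.
  assert (Hx : 0 < x) by (apply Rmin_pos; lra).
  assert (Hmx : 0 < margin x) by (apply Hpos; lra).
  assert (Hcont : forall p, x <= p <= P -> continuity_pt (fun p => - margin p) p).
  { intros p Hp. apply continuity_pt_opp, derivable_continuous_pt.
    eexists. apply derivable_margin. lra. }
  destruct (IVT_interv (fun p => - margin p) x P Hcont ltac:(lra) ltac:(lra) ltac:(lra))
    as [z [Hz Hmz]].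
  assert (Hmz0 : margin z = 0) by lra.
  assert (HzP : z < P) by (destruct (Req_dec z P) as [-> | ]; lra).
  assert (Hsz : margin_slope z < 0) by (apply (margin_slope_neg_at_root P); lra).
  exists z. split; [lra |]. split; [exact Hmz0 |]. split.
  - intros p Hp. pose proof (margin_decreasing p z ltac:(lra) ltac:(lra) ltac:(lra)). lra.
  - intros p Hp. destruct (Rle_or_lt (margin_slope p) 0) as [Hs | Hs].
    + pose proof (margin_decreasing z p ltac:(lra) ltac:(lra) Hs). lra.
    + destruct (Req_dec p P) as [-> | HpP]; [exact HmP |].
      pose proof (margin_increasing p P ltac:(lra) ltac:(lra) ltac:(lra)). lra.
Qed.

Lemma single_crossing_margin_slope P z : single_crossing margin P z -> margin_slope z < 0.
Proof.
  intros [Hz [Hmz [_ Hneg]]]. apply (margin_slope_neg_at_root P); [exact Hz | exact Hmz |].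
  apply Hneg. lra.
Qed.

End Margin.

Section Market.

Variables (N C s t M eta kp : R).
Hypotheses (hN : 0 < N) (hC : 0 < C) (hs : 0 < s < 1) (ht : 0 < t < 1) (hM : 0 < M)
  (heta : 0 < eta) (hkp : 0 < kp).

(* With Phi = p^(1/theta), the powers Phi^(1-sigma) and Phi^(2-sigma) in the
   closed forms of Defs become p^alpha and p^(gamma+1). *)
Definition alpha := (1 - s) / t.
Definition gamma := (2 - s) / t - 1.
Definition M1 := Rpower M (1 - s).
Definition M2 := Rpower M (2 - s).
Definition Pmax := Rpower M t.
Definition cmean := (1 - s) / (2 - s).
Definition cost_scale := eta * cmean * (gamma + 1).

Definition unit_revenue k p :=
  p - Rpower p (1 + alpha) / M1 - eta * k * cmean * (M2 - Rpower p (gamma + 1)) / M1.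

Definition marginal k := margin alpha gamma ((1 + alpha) / M1) (k * cost_scale / M1).

Definition traffic p := kp * N * cmean * (M2 - Rpower p (gamma + 1)) / M1.

Definition admissible k := 0 < k /\ eta * k * Rpower M (1 - t) < 1.

Definition pstar k := epsilon (inhabits 0) (single_crossing (marginal k) Pmax).

Lemma alpha_gt_0 : 0 < alpha.
Proof. unfold alpha. apply Rdiv_lt_0_compat; lra. Qed.

Lemma alpha_lt_gamma : alpha < gamma.
Proof.
  unfold alpha, gamma. replace ((2 - s) / t - 1) with ((1 - s) / t + (1 - t) / t) by (field; lra).
  assert (0 < (1 - t) / t) by (apply Rdiv_lt_0_compat; lra). lra.
Qed.

Lemma gamma_gt_0 : 0 < gamma.
Proof. pose proof alpha_gt_0. pose proof alpha_lt_gamma. lra. Qed.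

Lemma cmean_gt_0 : 0 < cmean.
Proof. unfold cmean. apply Rdiv_lt_0_compat; lra. Qed.

Lemma cost_scale_gt_0 : 0 < cost_scale.
Proof.
  unfold cost_scale. pose proof cmean_gt_0. pose proof gamma_gt_0.
  apply Rmult_lt_0_compat; [apply Rmult_lt_0_compat |]; lra.
Qed.

Lemma Pmax_gt_0 : 0 < Pmax.
Proof. apply Rpower_gt_0. Qed.

Lemma M1_gt_0 : 0 < M1.
Proof. apply Rpower_gt_0. Qed.

Lemma M2_eq : M2 = M1 * M.
Proof.
  unfold M2, M1. replace (2 - s) with ((1 - s) + 1) by ring.
  rewrite Rpower_plus, Rpower_1 by exact hM. reflexivity.
Qed.

Lemma Pmax_pow_alpha : Rpower Pmax alpha = M1.
Proof. unfold Pmax, M1, alpha. rewrite Rpower_mult. f_equal. field. lra. Qed.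

Lemma Pmax_pow_gamma1 : Rpower Pmax (gamma + 1) = M2.
Proof. unfold Pmax, M2, gamma. rewrite Rpower_mult. f_equal. field. lra. Qed.

Lemma Pmax_pow_gamma : Rpower Pmax gamma = M1 * Rpower M (1 - t).
Proof.
  unfold Pmax, M1, gamma. rewrite Rpower_mult, <- Rpower_plus. f_equal. field. lra.
Qed.

Lemma pmax_eq : pmax M t = Pmax.
Proof. apply rpow_Rpower, hM. Qed.

Lemma revenue_eq k p : 0 < p < Pmax -> revenue N s t M eta k p = N * unit_revenue k p.
Proof.
  intros Hp. unfold revenue. rewrite pmax_eq.
  destruct (Rlt_dec p Pmax) as [_ | ]; [| lra].
  unfold tailProb, tailMean, unit_revenue.
  rewrite (rpow_Rpower p), !(rpow_Rpower (Rpower p (1 / t))), !(rpow_Rpower M)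
    by (auto; lra || apply Rpower_gt_0).
  rewrite !Rpower_mult.
  replace (1 / t * (1 - s)) with alpha by (unfold alpha; field; lra).
  replace (1 / t * (2 - s)) with (gamma + 1) by (unfold gamma; field; lra).
  rewrite (Rpower_plus 1 alpha p), Rpower_1 by lra. fold M1 M2. unfold cmean.
  pose proof M1_gt_0. field. lra.
Qed.

Lemma revenue_nonpos_price k p : p <= 0 ->
  revenue N s t M eta k p = N * (p - eta * k * cmean * M2 / M1).
Proof.
  intros Hp. unfold revenue. rewrite pmax_eq. pose proof Pmax_gt_0.
  destruct (Rlt_dec p Pmax) as [_ | ]; [| lra].
  unfold tailProb, tailMean. rewrite (rpow_nonpos p), !(rpow_nonpos 0), !(rpow_Rpower M) by lra.
  fold M1 M2. unfold cmean. pose proof M1_gt_0. field. lra.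
Qed.

Lemma revenue_ge_Pmax k p : Pmax <= p -> revenue N s t M eta k p = 0.
Proof.
  intros Hp. unfold revenue. rewrite pmax_eq. destruct (Rlt_dec p Pmax); [lra | reflexivity].
Qed.

Lemma peak_eq p : 0 < p < Pmax -> peak N s t M kp p = traffic p.
Proof.
  intros Hp. unfold peak. rewrite pmax_eq. destruct (Rlt_dec p Pmax) as [_ | ]; [| lra].
  unfold tailMean, traffic.
  rewrite (rpow_Rpower p), !(rpow_Rpower (Rpower p (1 / t))), !(rpow_Rpower M)
    by (auto; lra || apply Rpower_gt_0).
  rewrite Rpower_mult. replace (1 / t * (2 - s)) with (gamma + 1) by (unfold gamma; field; lra).
  fold M1 M2. unfold cmean. pose proof M1_gt_0. field. lra.
Qed.

Lemma derivable_unit_revenue k p : 0 < p ->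
  derivable_pt_lim (unit_revenue k) p (marginal k p).
Proof.
  intros Hp. pose proof M1_gt_0.
  apply derivable_pt_lim_ext with (f := fun y => id y + (- (eta * k * cmean * M2 / M1)
    + (-1 / M1) * Rpower y (1 + alpha) + (eta * k * cmean / M1) * Rpower y (gamma + 1))).
  { intros y. unfold unit_revenue, id. field. lra. }
  replace (marginal k p) with (1 + ((-1 / M1) * ((1 + alpha) * Rpower p (1 + alpha - 1))
    + (eta * k * cmean / M1) * ((gamma + 1) * Rpower p (gamma + 1 - 1)))).
  - apply derivable_pt_lim_plus; [apply derivable_pt_lim_id |].
    apply derivable_pt_lim_Rpower_comb, Hp.
  - unfold marginal, margin, cost_scale.
    replace (1 + alpha - 1) with alpha by ring. replace (gamma + 1 - 1) with gamma by ring.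
    field. lra.
Qed.

Lemma derivable_revenue k p : 0 < p < Pmax ->
  derivable_pt_lim (revenue N s t M eta k) p (N * marginal k p).
Proof.
  intros Hp. apply (derivable_pt_lim_interval_ext _ (fun y => N * unit_revenue k y) 0 Pmax);
    [exact Hp | exact (revenue_eq k) |].
  apply derivable_pt_lim_scal, derivable_unit_revenue. lra.
Qed.

Lemma unit_revenue_Pmax k : unit_revenue k Pmax = 0.
Proof.
  unfold unit_revenue. rewrite Pmax_pow_gamma1, Rpower_plus, Pmax_pow_alpha, Rpower_1
    by apply Pmax_gt_0.
  pose proof M1_gt_0. field. lra.
Qed.

Lemma marginal_Pmax_neg k : admissible k -> marginal k Pmax < 0.
Proof.
  intros [Hk Hsmall]. pose proof M1_gt_0. pose proof alpha_gt_0.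
  unfold marginal, margin. rewrite Pmax_pow_alpha, Pmax_pow_gamma.
  replace (1 - (1 + alpha) / M1 * M1 + k * cost_scale / M1 * (M1 * Rpower M (1 - t)))
    with (alpha * (eta * k * Rpower M (1 - t) - 1)).
  - nra.
  - unfold cost_scale, cmean, gamma, alpha. field. lra.
Qed.

Lemma pstar_single_crossing k : admissible k -> single_crossing (marginal k) Pmax (pstar k).
Proof.
  intros Hk. unfold pstar. apply epsilon_spec.
  pose proof M1_gt_0. pose proof cost_scale_gt_0. destruct Hk as [Hk0 Hk1].
  apply margin_single_crossing.
  - exact alpha_gt_0.
  - exact alpha_lt_gamma.
  - pose proof alpha_gt_0. apply Rdiv_lt_0_compat; lra.
  - apply Rdiv_lt_0_compat; [apply Rmult_lt_0_compat |]; assumption.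
  - exact Pmax_gt_0.
  - apply marginal_Pmax_neg. split; assumption.
Qed.

Lemma revenue_critical_iff k q : admissible k -> 0 < q < Pmax ->
  derivable_pt_lim (revenue N s t M eta k) q 0 <-> q = pstar k.
Proof.
  intros Hk Hq. pose proof (pstar_single_crossing k Hk) as Hz.
  pose proof (derivable_revenue k q Hq) as Hd. split.
  - intros Hd0. pose proof (uniqueness_limite _ _ _ _ Hd0 Hd) as E.
    apply (single_crossing_root _ _ _ Hz); [lra | nra].
  - intros ->. destruct Hz as [_ [Hmz _]]. rewrite Hmz, Rmult_0_r in Hd. exact Hd.
Qed.

Lemma traffic_decreasing x y : 0 < x -> x < y -> traffic y < traffic x.
Proof.
  intros Hx Hxy. unfold traffic. pose proof M1_gt_0. pose proof cmean_gt_0.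
  assert (Rpower x (gamma + 1) < Rpower y (gamma + 1))
    by (pose proof gamma_gt_0; apply Rlt_Rpower_l; lra).
  unfold Rdiv. apply Rmult_lt_compat_r; [apply Rinv_0_lt_compat; lra |].
  assert (0 < kp * N * cmean) by (apply Rmult_lt_0_compat; [apply Rmult_lt_0_compat |]; lra).
  nra.
Qed.

Lemma traffic_continuous p : 0 < p -> continuity_pt traffic p.
Proof.
  intros Hp. apply derivable_continuous_pt. eexists.
  apply derivable_pt_lim_ext with (f := fun y => kp * N * cmean * M2 / M1
    + (- (kp * N * cmean / M1)) * Rpower y (gamma + 1) + 0 * Rpower y (gamma + 1)).
  - intros y. unfold traffic. pose proof M1_gt_0. field. lra.
  - apply derivable_pt_lim_Rpower_comb, Hp.
Qed.

Lemma traffic_Pmax : traffic Pmax = 0.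
Proof.
  unfold traffic. rewrite Pmax_pow_gamma1. pose proof M1_gt_0. field. lra.
Qed.

Lemma saturation_price p : 0 < p -> traffic p = C ->
  p = rpow M t * rpow (1 - C / (kp * N * meanPhi s M)) (t / (2 - s)).
Proof.
  intros Hp HC. pose proof M1_gt_0. pose proof cmean_gt_0.
  set (X := Rpower p (gamma + 1)).
  assert (HX : 0 < X) by apply Rpower_gt_0.
  assert (Hratio : 1 - C / (kp * N * meanPhi s M) = X / M2).
  { rewrite <- HC. unfold traffic, meanPhi. fold X. rewrite M2_eq. fold cmean. field. lra. }
  assert (HM2 : 0 < M2) by apply Rpower_gt_0.
  rewrite Hratio, (rpow_Rpower M), rpow_Rpower, Rpower_div by (auto; apply Rdiv_lt_0_compat; auto).
  unfold X, M2. rewrite !Rpower_mult.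
  replace ((gamma + 1) * (t / (2 - s))) with 1 by (unfold gamma; field; lra).
  replace ((2 - s) * (t / (2 - s))) with t by (field; lra).
  rewrite Rpower_1 by exact Hp. pose proof (Rpower_gt_0 M t). field. lra.
Qed.

Section FixedCost.

Variable k : R.
Hypothesis hk : admissible k.

Notation rev := (revenue N s t M eta k).
Notation feasible_price := (feasible N C s t M eta k kp).

Lemma fixed_cost_gt_0 : 0 < eta * k * cmean.
Proof.
  destruct hk as [Hk _]. pose proof cmean_gt_0.
  apply Rmult_lt_0_compat; [apply Rmult_lt_0_compat |]; assumption.
Qed.

Lemma revenue_zero_lt y : 0 < y < Pmax -> rev 0 < rev y.
Proof.
  intros Hy. rewrite revenue_nonpos_price, revenue_eq by lra.
  apply Rmult_lt_compat_l; [exact hN |].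
  pose proof M1_gt_0. pose proof cmean_gt_0. destruct hk as [Hk _].
  assert (Hya : Rpower y alpha < M1)
    by (rewrite <- Pmax_pow_alpha; apply Rlt_Rpower_l; [exact alpha_gt_0 | lra]).
  assert (0 < eta * k * cmean * Rpower y (gamma + 1) / M1).
  { apply Rdiv_lt_0_compat; [| lra].
    apply Rmult_lt_0_compat; [exact fixed_cost_gt_0 | apply Rpower_gt_0]. }
  assert (y * Rpower y alpha / M1 < y).
  { apply (Rmult_lt_reg_r M1); [lra |]. field_simplify; nra. }
  unfold unit_revenue. rewrite (Rpower_plus 1 alpha), Rpower_1 by lra.
  replace (eta * k * cmean * (M2 - Rpower y (gamma + 1)) / M1)
    with (eta * k * cmean * M2 / M1 - eta * k * cmean * Rpower y (gamma + 1) / M1)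
    by (field; lra).
  lra.
Qed.

Lemma revenue_increasing x y : 0 <= x -> x < y -> y <= pstar k -> rev x < rev y.
Proof.
  intros Hx Hxy Hy. pose proof (pstar_single_crossing k hk) as [Hz [_ [Hpos _]]].
  destruct (Req_dec x 0) as [-> | Hx0]; [apply revenue_zero_lt; lra |].
  apply (lt_of_derive_pos _ (fun p => N * marginal k p)); [exact Hxy | |].
  - intros p Hp. apply derivable_revenue. lra.
  - intros p Hp. specialize (Hpos p ltac:(lra)). nra.
Qed.

Lemma revenue_decreasing x y : pstar k <= x -> x < y -> y < Pmax -> rev y < rev x.
Proof.
  intros Hx Hxy Hy. pose proof (pstar_single_crossing k hk) as [Hz [_ [_ Hneg]]].
  apply (lt_of_derive_neg _ (fun p => N * marginal k p)); [exact Hxy | |].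
  - intros p Hp. apply derivable_revenue. lra.
  - intros p Hp. specialize (Hneg p ltac:(lra)). nra.
Qed.

Lemma revenue_pos p : pstar k <= p < Pmax -> 0 < rev p.
Proof.
  intros Hp. pose proof (pstar_single_crossing k hk) as [Hz [_ [_ Hneg]]].
  rewrite revenue_eq by lra. apply Rmult_lt_0_compat; [exact hN |].
  rewrite <- (unit_revenue_Pmax k).
  apply (lt_of_derive_neg _ (marginal k)); [lra | |].
  - intros q Hq. apply derivable_unit_revenue. lra.
  - intros q Hq. apply Hneg. lra.
Qed.

Lemma revenue_unimodal : exists v,
  (forall x y, 0 <= x -> x <= y -> y <= v -> y < Pmax -> rev x <= rev y) /\
  (forall x y, 0 <= x -> v <= x -> x <= y -> y < Pmax -> rev y <= rev x).
Proof.
  exists (pstar k). split.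
  - intros x y Hx Hxy Hy _. destruct (Req_dec x y) as [-> | Hne]; [lra |].
    apply Rlt_le, revenue_increasing; lra.
  - intros x y _ Hx Hxy Hy. destruct (Req_dec x y) as [-> | Hne]; [lra |].
    apply Rlt_le, revenue_decreasing; lra.
Qed.

Lemma revenue_max q : 0 < q < Pmax -> q <> pstar k -> rev q < rev (pstar k).
Proof.
  intros Hq Hne. destruct (Rlt_or_le q (pstar k)).
  - apply revenue_increasing; lra.
  - apply revenue_decreasing; [lra | lra | lra].
Qed.

(* A small price cannot cover the cost term, which tends to eta k E[Phi] as p -> 0. *)
Lemma revenue_pos_bounded_below :
  exists e, 0 < e /\ forall p, 0 < rev p -> e <= p /\ p < Pmax.
Proof.
  pose proof M1_gt_0. pose proof cmean_gt_0. pose proof gamma_gt_0.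
  assert (HM2 : 0 < M2) by apply Rpower_gt_0.
  pose proof fixed_cost_gt_0 as Hc.
  set (w := Rpower (M2 / 2) (/ (gamma + 1))).
  pose proof (Rmin_l (eta * k * cmean * M2 / (2 * M1)) w).
  pose proof (Rmin_r (eta * k * cmean * M2 / (2 * M1)) w).
  set (e := Rmin (eta * k * cmean * M2 / (2 * M1)) w) in *.
  exists e. split.
  { apply Rmin_pos; [apply Rdiv_lt_0_compat; nra | apply Rpower_gt_0]. }
  intros p Hr.
  destruct (Rle_or_lt p 0) as [Hp0 | Hp0].
  { rewrite revenue_nonpos_price in Hr by exact Hp0.
    assert (0 < eta * k * cmean * M2 / M1) by (apply Rdiv_lt_0_compat; nra). nra. }
  destruct (Rle_or_lt Pmax p) as [HpP | HpP].
  { rewrite revenue_ge_Pmax in Hr by exact HpP. lra. }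
  split; [| exact HpP].
  destruct (Rle_or_lt e p) as [He | He]; [exact He | exfalso].
  assert (HX : Rpower p (gamma + 1) < M2 / 2).
  { replace (M2 / 2) with (Rpower w (gamma + 1)).
    - apply Rlt_Rpower_l; lra.
    - unfold w. rewrite Rpower_mult. replace (/ (gamma + 1) * (gamma + 1)) with 1 by (field; lra).
      apply Rpower_1. lra. }
  rewrite revenue_eq in Hr by lra. unfold unit_revenue in Hr.
  assert (p < eta * k * cmean * (M2 - Rpower p (gamma + 1)) / M1).
  { apply (Rlt_le_trans _ (eta * k * cmean * M2 / (2 * M1))); [lra |].
    unfold Rdiv. rewrite Rinv_mult.
    replace (eta * k * cmean * M2 * (/ 2 * / M1)) with (eta * k * cmean * (M2 / 2) * / M1) by (field; lra).
    apply Rmult_le_compat_r; [apply Rlt_le, Rinv_0_lt_compat; lra |].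
    apply Rmult_le_compat_l; lra. }
  assert (0 < Rpower p (1 + alpha) / M1) by (apply Rdiv_lt_0_compat; [apply Rpower_gt_0 | lra]).
  nra.
Qed.

Lemma feasible_in_range p : feasible_price p -> 0 < p < Pmax.
Proof.
  intros [Hr _]. destruct revenue_pos_bounded_below as [e [He Hb]].
  specialize (Hb p Hr). lra.
Qed.

Lemma feasible_exists : exists p, feasible_price p.
Proof.
  pose proof (pstar_single_crossing k hk) as [Hz _].
  destruct (continuity_pt_pos_near (fun p => C - traffic p) Pmax) as [d [Hd Hnear]].
  - apply continuity_pt_minus; [apply continuity_pt_const; intros ? ?; reflexivity |].
    apply traffic_continuous, Pmax_gt_0.
  - rewrite traffic_Pmax. lra.
  - pose proof (Rmax_l (pstar k) (Pmax - d / 2)). pose proof (Rmax_r (pstar k) (Pmax - d / 2)).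
    assert (Hp : Rmax (pstar k) (Pmax - d / 2) < Pmax) by (apply Rmax_lub_lt; lra).
    set (p := Rmax (pstar k) (Pmax - d / 2)) in *.
    exists ((p + Pmax) / 2). split.
    + apply revenue_pos. lra.
    + rewrite peak_eq by lra. enough (0 < C - traffic ((p + Pmax) / 2)) by lra.
      apply Hnear. apply Rabs_def1; lra.
Qed.

Lemma feasible_interval x y w : feasible_price x -> feasible_price y -> x <= w -> w <= y ->
  feasible_price w.
Proof.
  intros Hx Hy Hxw Hwy.
  pose proof (feasible_in_range x Hx). pose proof (feasible_in_range y Hy).
  destruct Hx as [Hrx Hpx], Hy as [Hry _]. split.
  - destruct (Rle_or_lt w (pstar k)).
    + destruct (Req_dec x w) as [<- | Hne]; [exact Hrx |].
      pose proof (revenue_increasing x w ltac:(lra) ltac:(lra) ltac:(lra)). lra.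
    + destruct (Req_dec w y) as [-> | Hne]; [exact Hry |].
      pose proof (revenue_decreasing w y ltac:(lra) ltac:(lra) ltac:(lra)). lra.
  - destruct (Req_dec x w) as [<- | Hne]; [exact Hpx |].
    rewrite peak_eq in Hpx |- * by lra.
    pose proof (traffic_decreasing x w ltac:(lra) ltac:(lra)). lra.
Qed.

Lemma feasible_glb p0 : is_glb feasible_price p0 -> 0 < p0 < Pmax /\ traffic p0 <= C.
Proof.
  intros [Hlow Hgreat].
  destruct feasible_exists as [p1 Hp1].
  destruct revenue_pos_bounded_below as [e [He Hb]].
  assert (He0 : e <= p0) by (apply Hgreat; intros y [Hy _]; apply (Hb y Hy)).
  pose proof (Hlow p1 Hp1). pose proof (feasible_in_range p1 Hp1).
  assert (Hp0 : 0 < p0 < Pmax) by lra. split; [exact Hp0 |].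
  destruct (Rle_or_lt (traffic p0) C) as [Hle | Hgt]; [exact Hle | exfalso].
  destruct (continuity_pt_pos_near (fun p => traffic p - C) p0) as [d [Hd Hnear]].
  - apply continuity_pt_minus; [apply traffic_continuous; lra |].
    apply continuity_pt_const. intros ? ?. reflexivity.
  - lra.
  - enough (p0 + d / 2 <= p0) by lra.
    apply Hgreat. intros y Hy. pose proof (Hlow y Hy).
    destruct (Rle_or_lt (p0 + d / 2) y) as [Hle | Hlt]; [exact Hle | exfalso].
    pose proof (feasible_in_range y Hy). destruct Hy as [_ Hpy].
    rewrite peak_eq in Hpy by lra.
    assert (0 < traffic y - C) by (apply Hnear; apply Rabs_def1; lra). lra.
Qed.

Lemma unique_equilibrium_of_strict_max p : feasible_price p ->
  (forall q, feasible_price q -> q <> p -> rev q < rev p) ->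
  unique_equilibrium N C s t M eta k kp p.
Proof.
  intros Hf Hmax. split; [split; [exact Hf |] |].
  - intros q Hq. destruct (Req_dec q p) as [-> | Hne]; [lra |].
    apply Rlt_le, Hmax; assumption.
  - intros q [Hq Hqmax]. destruct (Req_dec q p) as [E | Hne]; [exact E |].
    specialize (Hqmax p Hf). pose proof (Hmax q Hq Hne). lra.
Qed.

(* Otherwise prices slightly below p0 would still be feasible. *)
Lemma glb_saturated p0 : is_glb feasible_price p0 -> pstar k < p0 -> traffic p0 = C.
Proof.
  intros Hglb Hzp. pose proof (feasible_glb p0 Hglb) as [Hp0 Htr].
  pose proof (pstar_single_crossing k hk) as [Hz _].
  destruct (Req_dec (traffic p0) C) as [E | Hne]; [exact E | exfalso].
  destruct (continuity_pt_pos_near (fun p => C - traffic p) p0) as [d [Hd Hnear]].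
  - apply continuity_pt_minus; [apply continuity_pt_const; intros ? ?; reflexivity |].
    apply traffic_continuous. lra.
  - lra.
  - pose proof (Rmin_l (d / 2) ((p0 - pstar k) / 2)).
    pose proof (Rmin_r (d / 2) ((p0 - pstar k) / 2)).
    assert (0 < Rmin (d / 2) ((p0 - pstar k) / 2)) by (apply Rmin_pos; lra).
    set (y := p0 - Rmin (d / 2) ((p0 - pstar k) / 2)).
    assert (Hy : feasible_price y).
    { split; [apply revenue_pos; unfold y; lra |].
      rewrite peak_eq by (unfold y; lra).
      enough (0 < C - traffic y) by lra. apply Hnear. apply Rabs_def1; unfold y; lra. }
    destruct Hglb as [Hlow _]. specialize (Hlow y Hy). unfold y in Hlow. lra.
Qed.

Lemma opt_saturated p0 l : is_glb feasible_price p0 ->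
  derivable_pt_lim rev p0 l -> l < 0 ->
  unique_equilibrium N C s t M eta k kp p0 /\ peak N s t M kp p0 = C /\
  p0 = rpow M t * rpow (1 - C / (kp * N * meanPhi s M)) (t / (2 - s)).
Proof.
  intros Hglb Hl Hneg. pose proof (feasible_glb p0 Hglb) as [Hp0 _].
  pose proof (uniqueness_limite _ _ _ _ Hl (derivable_revenue k p0 Hp0)) as El.
  assert (Hzp : pstar k < p0)
    by (apply (single_crossing_gt _ _ _ (pstar_single_crossing k hk)); nra).
  pose proof (glb_saturated p0 Hglb Hzp) as Hsat.
  split; [| split].
  - apply unique_equilibrium_of_strict_max.
    + split; [apply revenue_pos | rewrite peak_eq]; lra.
    + intros q Hq Hne. destruct Hglb as [Hlow _]. pose proof (Hlow q Hq).
      pose proof (feasible_in_range q Hq). apply revenue_decreasing; lra.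
  - rewrite peak_eq by exact Hp0. exact Hsat.
  - apply saturation_price; [lra | exact Hsat].
Qed.

Lemma opt_unsaturated p0 l : is_glb feasible_price p0 ->
  derivable_pt_lim rev p0 l -> 0 < l ->
  unique_equilibrium N C s t M eta k kp (pstar k) /\ peak N s t M kp (pstar k) <> C.
Proof.
  intros Hglb Hl Hpos. pose proof (feasible_glb p0 Hglb) as [Hp0 Htr].
  pose proof (pstar_single_crossing k hk) as Hz.
  pose proof (uniqueness_limite _ _ _ _ Hl (derivable_revenue k p0 Hp0)) as El.
  assert (Hpz : p0 < pstar k) by (apply (single_crossing_lt _ _ _ Hz); nra).
  destruct Hz as [Hz _].
  assert (Hunsat : peak N s t M kp (pstar k) < C).
  { rewrite peak_eq by exact Hz. pose proof (traffic_decreasing p0 (pstar k) ltac:(lra) Hpz). lra. }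
  split; [| lra].
  apply unique_equilibrium_of_strict_max; [split; [apply revenue_pos |]; lra |].
  intros q Hq Hne. apply revenue_max; [apply feasible_in_range |]; assumption.
Qed.

End FixedCost.

Lemma admissible_nbhd k0 : admissible k0 ->
  exists d, 0 < d /\ forall k, Rabs (k - k0) < d -> admissible k.
Proof.
  intros [Hk0 Hsmall]. set (Q := eta * Rpower M (1 - t)).
  assert (HQ : 0 < Q) by (apply Rmult_lt_0_compat; [exact heta | apply Rpower_gt_0]).
  assert (Hk0Q : k0 < / Q).
  { apply (Rmult_lt_reg_r Q); [exact HQ |]. rewrite Rinv_l by lra. unfold Q. lra. }
  exists (Rmin k0 (/ Q - k0)). split; [apply Rmin_pos; lra |].
  intros k Hk. apply Rabs_def2 in Hk.
  pose proof (Rmin_l k0 (/ Q - k0)). pose proof (Rmin_r k0 (/ Q - k0)).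
  split; [lra |].
  replace (eta * k * Rpower M (1 - t)) with (k * Q) by (unfold Q; ring).
  replace 1 with (/ Q * Q) by (field; lra).
  apply Rmult_lt_compat_r; lra.
Qed.

Lemma marginal_shift k0 k p :
  marginal k p = marginal k0 p + (k - k0) * cost_scale / M1 * Rpower p gamma.
Proof. unfold marginal, margin. pose proof M1_gt_0. field. lra. Qed.

Lemma marginal_continuous_in_cost p k0 : continuity_pt (fun k => marginal k p) k0.
Proof. unfold marginal, margin. reg. Qed.

Lemma pstar_increasing k1 k2 : admissible k1 -> admissible k2 -> k1 < k2 ->
  pstar k1 < pstar k2.
Proof.
  intros H1 H2 Hk. pose proof (pstar_single_crossing k1 H1) as [Hz1 [Hm1 _]].
  apply (single_crossing_lt _ _ _ (pstar_single_crossing k2 H2)); [lra |].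
  rewrite (marginal_shift k1), Hm1.
  pose proof cost_scale_gt_0. pose proof M1_gt_0. pose proof (Rpower_gt_0 (pstar k1) gamma).
  assert (0 < (k2 - k1) * cost_scale / M1) by (apply Rdiv_lt_0_compat; nra).
  nra.
Qed.

(* Near k0 the marginal keeps its signs at pstar k0 -+ e, so the crossing of
   marginal k stays within e of pstar k0. *)
Lemma pstar_continuous k0 : admissible k0 -> continuity_pt pstar k0.
Proof.
  intros Hk0. pose proof (pstar_single_crossing k0 Hk0) as Hz.
  destruct (admissible_nbhd k0 Hk0) as [d0 [Hd0 Hadm]].
  intros eps Heps. set (z := pstar k0) in *.
  destruct Hz as [Hz [_ [Hpos Hneg]]].
  set (e := Rmin eps (Rmin z (Pmax - z)) / 2).
  assert (He : 0 < e /\ e < eps /\ e < z /\ e <= (Pmax - z) / 2).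
  { pose proof (Rmin_l eps (Rmin z (Pmax - z))). pose proof (Rmin_r eps (Rmin z (Pmax - z))).
    pose proof (Rmin_l z (Pmax - z)). pose proof (Rmin_r z (Pmax - z)).
    assert (0 < Rmin eps (Rmin z (Pmax - z))) by (repeat apply Rmin_pos; lra).
    unfold e. lra. }
  destruct (continuity_pt_pos_near (fun k => marginal k (z - e)) k0) as [d1 [Hd1 Hm]].
  { apply marginal_continuous_in_cost. }
  { apply Hpos. lra. }
  destruct (continuity_pt_neg_near (fun k => marginal k (z + e)) k0) as [d2 [Hd2 Hp]].
  { apply marginal_continuous_in_cost. }
  { apply Hneg. lra. }
  exists (Rmin d0 (Rmin d1 d2)). split; [repeat apply Rmin_pos; assumption |].
  intros k [_ Hk]. simpl in Hk. unfold R_dist in *.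
  pose proof (Rmin_l d0 (Rmin d1 d2)). pose proof (Rmin_r d0 (Rmin d1 d2)).
  pose proof (Rmin_l d1 d2). pose proof (Rmin_r d1 d2).
  pose proof (pstar_single_crossing k (Hadm k ltac:(lra))) as Hzk.
  assert (z - e < pstar k) by (apply (single_crossing_lt _ _ _ Hzk); [lra | apply Hm; lra]).
  assert (pstar k < z + e) by (apply (single_crossing_gt _ _ _ Hzk); [lra | apply Hp; lra]).
  apply Rabs_def1; lra.
Qed.

(* The cost coefficient for which the price p is critical: marginal k p = 0
   iff k = critical_cost p. *)
Definition critical_cost p :=
  (1 + alpha) / cost_scale * Rpower p (alpha - gamma) - M1 / cost_scale * Rpower p (- gamma).

Definition critical_cost_deriv p :=
  (1 + alpha) / cost_scale * ((alpha - gamma) * Rpower p (alpha - gamma - 1))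
  + M1 / cost_scale * (gamma * Rpower p (- gamma - 1)).

Lemma derivable_critical_cost p : 0 < p ->
  derivable_pt_lim critical_cost p (critical_cost_deriv p).
Proof.
  intros Hp.
  apply derivable_pt_lim_ext with (f := fun y =>
    0 + (1 + alpha) / cost_scale * Rpower y (alpha - gamma) + (- (M1 / cost_scale)) * Rpower y (- gamma)).
  { intros y. unfold critical_cost. ring. }
  replace (critical_cost_deriv p) with ((1 + alpha) / cost_scale * ((alpha - gamma) * Rpower p (alpha - gamma - 1))
    + (- (M1 / cost_scale)) * (- gamma * Rpower p (- gamma - 1))) by (unfold critical_cost_deriv; ring).
  apply derivable_pt_lim_Rpower_comb, Hp.
Qed.

Lemma marginal_root_eq k p : marginal k p = 0 ->
  k * (cost_scale * Rpower p gamma) = (1 + alpha) * Rpower p alpha - M1.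
Proof.
  intros Hm. unfold marginal, margin in Hm. pose proof M1_gt_0.
  assert (Hm' : M1 * (1 - (1 + alpha) / M1 * Rpower p alpha
                + k * cost_scale / M1 * Rpower p gamma) = 0) by (rewrite Hm; ring).
  field_simplify in Hm'; lra.
Qed.

Lemma critical_cost_pstar k : admissible k -> critical_cost (pstar k) = k.
Proof.
  intros Hk. pose proof (pstar_single_crossing k Hk) as [Hz [Hmz _]].
  pose proof (marginal_root_eq k _ Hmz) as Hk_eq.
  set (z := pstar k) in *. pose proof M1_gt_0. pose proof cost_scale_gt_0.
  assert (Hzg : 0 < Rpower z gamma) by apply Rpower_gt_0.
  apply (Rmult_eq_reg_r (cost_scale * Rpower z gamma)); [| nra].
  rewrite Hk_eq. unfold critical_cost.
  replace (alpha - gamma) with (alpha + - gamma) by ring.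
  rewrite Rpower_plus, !Rpower_Ropp. field. lra.
Qed.

(* Positivity is the downward crossing of the marginal at pstar k. *)
Lemma critical_cost_deriv_pos k : admissible k -> 0 < critical_cost_deriv (pstar k).
Proof.
  intros Hk. pose proof (pstar_single_crossing k Hk) as Hcross.
  pose proof M1_gt_0. pose proof cost_scale_gt_0. pose proof alpha_gt_0.
  assert (Hslope : margin_slope alpha gamma ((1 + alpha) / M1) (k * cost_scale / M1) (pstar k) < 0).
  { destruct Hk as [Hk0 _].
    apply (single_crossing_margin_slope _ _ _ _ alpha_gt_0 alpha_lt_gamma) with (P := Pmax);
      [apply Rdiv_lt_0_compat; nra | exact Hcross]. }
  destruct Hcross as [Hz [Hmz _]]. pose proof (marginal_root_eq k _ Hmz) as Hk_eq.
  set (z := pstar k) in *. unfold margin_slope in Hslope.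
  set (a := Rpower z alpha) in *. set (w := Rpower z (gamma - alpha)) in *.
  set (q := Rpower z (gamma + 1)).
  assert (Ha : 0 < a) by apply Rpower_gt_0. assert (Hq : 0 < q) by apply Rpower_gt_0.
  assert (Hg : Rpower z gamma = a * w) by (unfold a, w; rewrite <- Rpower_plus; f_equal; ring).
  assert (Hw : k * cost_scale * gamma * w < (1 + alpha) * alpha).
  { assert (Hdiv : (k * cost_scale * gamma * w - (1 + alpha) * alpha) / M1 < 0)
      by (replace (_ / M1) with (k * cost_scale / M1 * gamma * w - (1 + alpha) / M1 * alpha)
            by (field; lra); exact Hslope).
    assert (k * cost_scale * gamma * w - (1 + alpha) * alpha
            = (k * cost_scale * gamma * w - (1 + alpha) * alpha) / M1 * M1) by (field; lra).
    nra. }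
  unfold critical_cost_deriv.
  replace (alpha - gamma - 1) with (alpha + - (gamma + 1)) by ring.
  replace (- gamma - 1) with (- (gamma + 1)) by ring.
  rewrite Rpower_plus, !Rpower_Ropp. fold a q.
  replace M1 with ((1 + alpha) * a - k * cost_scale * (a * w)).
  2:{ rewrite <- Hg. replace ((1 + alpha) * a) with (k * (cost_scale * Rpower z gamma) + M1) by lra.
      ring. }
  replace (_ + _) with (a * ((1 + alpha) * alpha - k * cost_scale * gamma * w) / (cost_scale * q))
    by (field; lra).
  apply Rdiv_lt_0_compat; apply Rmult_lt_0_compat; lra.
Qed.

(* pstar is the inverse of critical_cost, so its derivative is 1/critical_cost'. *)
Lemma pstar_derivable k0 : admissible k0 -> exists d, derivable_pt_lim pstar k0 d /\ 0 < d.
Proof.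
  intros Hk0. destruct (admissible_nbhd k0 Hk0) as [d0 [Hd0 Hadm]].
  set (lb := k0 - d0 / 2). set (ub := k0 + d0 / 2).
  assert (Hlb : admissible lb) by (apply Hadm; unfold lb; apply Rabs_def1; lra).
  assert (Hub : admissible ub) by (apply Hadm; unfold ub; apply Rabs_def1; lra).
  pose proof (pstar_single_crossing lb Hlb) as [Hzlb _].
  assert (Prf : forall p, pstar lb <= p <= pstar ub -> derivable_pt critical_cost p).
  { intros p Hp. exists (critical_cost_deriv p). apply derivable_critical_cost. lra. }
  assert (Hincr : pstar lb <= pstar k0 <= pstar ub).
  { split; apply Rlt_le, pstar_increasing; auto; unfold lb, ub; lra. }
  assert (Hinv : forall k, lb <= k <= ub -> comp critical_cost pstar k = id k).
  { intros k Hk. unfold lb, ub in Hk. unfold comp, id.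
    apply critical_cost_pstar, Hadm. apply Rabs_def1; lra. }
  assert (HD : derive_pt critical_cost (pstar k0) (Prf (pstar k0) Hincr)
               = critical_cost_deriv (pstar k0)).
  { apply derive_pt_eq_0, derivable_critical_cost.
    pose proof (pstar_increasing lb k0 Hlb Hk0 ltac:(unfold lb; lra)). lra. }
  pose proof (critical_cost_deriv_pos k0 Hk0) as Hpos.
  pose proof (derivable_pt_lim_recip_interv critical_cost pstar lb ub k0 Prf
    (pstar_continuous k0 Hk0) ltac:(unfold lb, ub; lra) ltac:(unfold lb, ub; lra)
    Hincr Hinv ltac:(rewrite HD; lra)) as Hder.
  rewrite HD in Hder. exists (1 / critical_cost_deriv (pstar k0)). split; [exact Hder |].
  apply Rdiv_lt_0_compat; lra.
Qed.

Lemma pstar_sensitivity k0 : admissible k0 ->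
  exists (ps : R -> R) (delta : R),
    0 < delta /\ ps k0 = pstar k0 /\
    (forall k, Rabs (k - k0) < delta ->
       0 < ps k < Pmax /\ derivable_pt_lim (revenue N s t M eta k) (ps k) 0 /\
       (forall q, 0 < q < Pmax -> derivable_pt_lim (revenue N s t M eta k) q 0 -> q = ps k)) /\
    exists d, derivable_pt_lim ps k0 d /\ 0 < d.
Proof.
  intros Hk0. destruct (admissible_nbhd k0 Hk0) as [d0 [Hd0 Hadm]].
  exists pstar, d0. split; [exact Hd0 |]. split; [reflexivity |]. split.
  - intros k Hk. specialize (Hadm k Hk).
    pose proof (pstar_single_crossing k Hadm) as [Hz _].
    split; [exact Hz |]. split.
    + apply (revenue_critical_iff k); auto.
    + intros q Hq. apply (revenue_critical_iff k q Hadm Hq).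
  - apply pstar_derivable, Hk0.
Qed.

End Market.

Theorem proposition1 (N C sigma theta M eta kavg kpeak : R)
  (hN : 0 < N) (hC : 0 < C)
  (hsigma : 0 < sigma < 1) (htheta : 0 < theta < 1) (hM : 0 < M)
  (heta : 0 < eta) (hkavg : 0 < kavg <= 1) (hkpeak : 0 < kpeak <= 1)
  (heta_small : eta < / (kavg * rpow M (1 - theta))) :
  (exists v : R,
     (forall x y, 0 <= x -> x <= y -> y <= v -> y < pmax M theta ->
        revenue N sigma theta M eta kavg x <= revenue N sigma theta M eta kavg y) /\
     (forall x y, 0 <= x -> v <= x -> x <= y -> y < pmax M theta ->
        revenue N sigma theta M eta kavg y <= revenue N sigma theta M eta kavg x)) /\
  (exists p, feasible N C sigma theta M eta kavg kpeak p) /\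
  (forall x y z, feasible N C sigma theta M eta kavg kpeak x ->
     feasible N C sigma theta M eta kavg kpeak y -> x <= z -> z <= y ->
     feasible N C sigma theta M eta kavg kpeak z) /\
  (forall p0 : R, is_glb (feasible N C sigma theta M eta kavg kpeak) p0 ->
    ((exists l, derivable_pt_lim (revenue N sigma theta M eta kavg) p0 l /\ l < 0) ->
       unique_equilibrium N C sigma theta M eta kavg kpeak p0 /\
       peak N sigma theta M kpeak p0 = C /\
       p0 = rpow M theta *
            rpow (1 - C / (kpeak * N * meanPhi sigma M)) (theta / (2 - sigma))) /\
    ((exists l, derivable_pt_lim (revenue N sigma theta M eta kavg) p0 l /\ 0 < l) ->
       exists pstar : R,
         unique_equilibrium N C sigma theta M eta kavg kpeak pstar /\
         peak N sigma theta M kpeak pstar <> C /\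
         0 < pstar < pmax M theta /\
         derivable_pt_lim (revenue N sigma theta M eta kavg) pstar 0 /\
         (forall q, 0 < q < pmax M theta ->
            derivable_pt_lim (revenue N sigma theta M eta kavg) q 0 -> q = pstar) /\
         (* p*(kappa_avg) as a function of kappa_avg: near kavg it is the
            unique critical point of R in (0, p_max), and its derivative at
            kavg is positive *)
         exists (ps : R -> R) (delta : R),
           0 < delta /\ ps kavg = pstar /\
           (forall k, Rabs (k - kavg) < delta ->
              0 < ps k < pmax M theta /\
              derivable_pt_lim (revenue N sigma theta M eta k) (ps k) 0 /\
              (forall q, 0 < q < pmax M theta ->
                 derivable_pt_lim (revenue N sigma theta M eta k) q 0 -> q = ps k)) /\
           exists d, derivable_pt_lim ps kavg d /\ 0 < d)).
Proof.
  assert (hk : admissible theta M eta kavg).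
  { rewrite rpow_Rpower in heta_small by exact hM.
    pose proof (Rpower_gt_0 M (1 - theta)).
    assert (HX : 0 < kavg * Rpower M (1 - theta)) by nra.
    split; [lra |].
    apply (Rmult_lt_compat_r (kavg * Rpower M (1 - theta))) in heta_small; [| exact HX].
    rewrite Rinv_l in heta_small by lra. lra. }
  destruct hkpeak as [hkp _].
  rewrite pmax_eq by exact hM.
  split; [| split; [| split]].
  - eapply revenue_unimodal; eassumption.
  - eapply feasible_exists; eassumption.
  - intros x y z. eapply feasible_interval; eassumption.
  - intros p0 Hglb. split.
    + intros [l [Hl Hneg]]. eapply opt_saturated; eassumption.
    + intros [l [Hl Hpos]].
      destruct (opt_unsaturated N C sigma theta M eta kpeak hN hC hsigma htheta hM heta hkp
        kavg hk p0 l Hglb Hl Hpos) as [Hunique Hunsat].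
      destruct (pstar_single_crossing _ _ _ _ hsigma htheta heta _ hk) as [Hz _].
      exists (pstar sigma theta M eta kavg).
      split; [exact Hunique |]. split; [exact Hunsat |]. split; [exact Hz |]. split; [| split].
      * now apply (revenue_critical_iff _ _ _ _ _ hN hsigma htheta hM heta _ _ hk Hz).
      * intros q Hq. apply (revenue_critical_iff _ _ _ _ _ hN hsigma htheta hM heta _ _ hk Hq).
      * eapply pstar_sensitivity; eauto.
Qed.
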